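(* Suppose $S\subseteq\{0,1\}^n$ and $f_t(\boldsymbol{x},\boldsymbol{\xi})=(\boldsymbol{A}^t\boldsymbol{x}+\boldsymbol{a}^t)^{\top}\boldsymbol{\xi}+(\boldsymbol{b}^t)^{\top}\boldsymbol{x}+h^t$ for all $t\in[T]$ (with $\boldsymbol{A}^t\in\mathbb{R}^{m\times n}$, $\boldsymbol{a}^t\in\mathbb{R}^m$, $\boldsymbol{b}^t\in\mathbb{R}^n$, $h^t\in\mathbb{R}$). Let $Z_{C_2}$ be the set of $\boldsymbol{x}\in\mathbb{R}^n$ for which there exist $\lambda\ge0$, $\alpha_t\ge0$, $s_i\ge0$, $\boldsymbol{z}_{it}\in\mathbb{R}^m$ satisfying the system ( * ): $\lambda\delta+\frac1N\sum_{i=1}^Ns_i\le\epsilon$; $G_{f_t}(\boldsymbol{z}_{it},\alpha_t,\boldsymbol{x})+1-\boldsymbol{z}_{it}^{\top}\boldsymbol{\zeta}^i-s_i\le0$ and $\|\boldsymbol{z}_{it}\|_*\le\lambda$ for all $i\in[N],t\in[T]$, where $G_{f_t}(\boldsymbol{z},\alpha,\boldsymbol{x})=\sup_{\boldsymbol{\xi}\in\Xi}[\boldsymbol{z}^{\top}\boldsymbol{\xi}-\alpha f_t(\boldsymbol{x},\boldsymbol{\xi})]$. Assume there is a vector $\boldsymbol{M}$ such that $\alpha_t\le M_t$ for all $t$ whenever $(\lambda,\boldsymbol{s},\boldsymbol{z},\boldsymbol{\alpha},\boldsymbol{x})$ satisfies ( * ) with $\boldsymbol{x}\in S$. Define $\hat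 f_t((\alpha_t,\boldsymbol{y}^t),\boldsymbol{\xi})=(\boldsymbol{A}^t\boldsymbol{y}^t+\boldsymbol{a}^t\alpha_t)^{\top}\boldsymbol{\xi}+(\boldsymbol{b}^t)^{\top}\boldsymbol{y}^t+h^t\alpha_t$ and let $\hat Z_{C_2}$ be the set of $\boldsymbol{x}\in\mathbb{R}^n$ for which there exist $\lambda\ge0$, $\alpha_t\ge0$, $s_i\ge0$, $\boldsymbol{z}_{it}\in\mathbb{R}^m$, $\boldsymbol{y}^t\in\mathbb{R}^n$ with $\lambda\delta+\frac1N\sum_{i=1}^Ns_i\le\epsilon$; $\sup_{\boldsymbol{\xi}\in\Xi}[\boldsymbol{z}_{it}^{\top}\boldsymbol{\xi}-\hat f_t((\alpha_t,\boldsymbol{y}^t),\boldsymbol{\xi})]+1-\boldsymbol{z}_{it}^{\top}\boldsymbol{\zeta}^i-s_i\le0$ for all $i\in[N],t\in[T]$; $0\le y^t_r\le M_tx_r$ and $\alpha_t-M_t(1-x_r)\le y^t_r\le\alpha_t$ for all $r\in[n],t\in[T]$; $\|\boldsymbol{z}_{it}\|_*\le\lambda$ for all $i\in[N],t\in[T]$. Then $\hat Z_{C_2}$ is convex and $S\cap\hat Z_{C_2}=S\cap Z_{C_2}\subseteq S\cap Z_D$, where $Z_D=\{\boldsymbol{x}\in\mathbb{R}^n:\inf_{\mathbb{P}\in\mathcal{P}_W}\mathbb{P}\{\boldsymbol{\xi}:f_t(\boldsymbol{x},\boldsymbol{\xi})\ge0\ \forall t\in[T]\}\ge1-\epsilo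n\}$.
   Context: Setting: $\epsilon\in(0,1)$, $\delta>0$, $[T]=\{1,\dots,T\}$; $\Xi\subseteq\mathbb{R}^m$ is a nonempty closed convex set; $\|\cdot\|$ is a norm on $\mathbb{R}^m$ with dual norm $\|\cdot\|_*$; $\boldsymbol{\zeta}^1,\dots,\boldsymbol{\zeta}^N\in\Xi$ are given samples with empirical distribution $\mathbb{P}_{\tilde\zeta}$ (mass $1/N$ each); $\mathcal{P}_W=\{\mathbb{P}:\mathbb{P}\{\boldsymbol{\xi}\in\Xi\}=1,\ W(\mathbb{P},\mathbb{P}_{\tilde\zeta})\le\delta\}$ with $W$ the 1-Wasserstein distance with transport cost $\|\boldsymbol{\xi}_1-\boldsymbol{\xi}_2\|$. *)

From HB Require Import structures.
From mathcomp Require Import all_boot all_order all_algebra.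
From mathcomp Require Import all_classical all_reals all_analysis.
Set Implicit Arguments. Unset Strict Implicit. Unset Printing Implicit Defensive.
Import Order.TTheory GRing.Theory Num.Theory.
Import numFieldNormedType.Exports.
Local Open Scope classical_set_scope.
Local Open Scope ring_scope.

Definition dotv (R : realType) (k : nat) (u v : 'cV[R]_k) : R :=
  \sum_(i < k) u i 0 * v i 0.

Definition is_norm (R : realType) (m : nat) (nrm : 'cV[R]_m -> R) : Prop :=
  [/\ (forall x, 0 <= nrm x),
      (forall x, nrm x = 0 -> x = 0),
      (forall (c : R) x, nrm (c *: x) = `|c| * nrm x)
    & (forall x y, nrm (x + y) <= nrm x + nrm y)].

Definition dual_norm (R : realType) (m : nat) (nrm : 'cV[R]_m -> R)
  (z : 'cV[R]_m) : R :=
  sup [set dotv z xi | xi in [set xi | nrm xi <= 1]].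

Definition Rvec (R : realType) (m : nat) :=
  g_sigma_algebraType (@open 'cV[R]_m).

Definition empirical (R : realType) (m N : nat) (zeta : 'I_N -> 'cV[R]_m)
  (A : set (Rvec R m)) : \bar R :=
  ((N%:R)^-1 * \sum_(i < N) (\1_A (zeta i : Rvec R m)))%:E.

Definition is_coupling (R : realType) (m : nat)
  (P Q : set (Rvec R m) -> \bar R)
  (pi : probability (Rvec R m * Rvec R m)%type R) : Prop :=
  forall A : set (Rvec R m), measurable A ->
    pi (A `*` setT) = P A /\ pi (setT `*` A) = Q A.

Definition wasserstein (R : realType) (m : nat) (nrm : 'cV[R]_m -> R)
  (P Q : set (Rvec R m) -> \bar R) : \bar R :=
  ereal_inf [set (\int[pi]_p (nrm ((p.1 : 'cV[R]_m) - p.2))%:E)%E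
            | pi in [set pi | is_coupling P Q pi]].

Definition ambiguity_set (R : realType) (m N : nat) (nrm : 'cV[R]_m -> R)
  (Xi : set 'cV[R]_m) (zeta : 'I_N -> 'cV[R]_m) (delta : R) :
  set (probability (Rvec R m) R) :=
  [set P | P (Xi : set (Rvec R m)) = 1%E /\
           (wasserstein nrm P (empirical zeta) <= delta%:E)%E].

Definition fpiece (R : realType) (m n T : nat)
  (A : 'I_T -> 'M[R]_(m, n)) (a : 'I_T -> 'cV[R]_m) (b : 'I_T -> 'cV[R]_n)
  (h : 'I_T -> R) (t : 'I_T) (x : 'cV[R]_n) (xi : 'cV[R]_m) : R :=
  dotv (A t *m x + a t) xi + dotv (b t) x + h t.

Definition fhat (R : realType) (m n T : nat)
  (A : 'I_T -> 'M[R]_(m, n)) (a : 'I_T -> 'cV[R]_m) (b : 'I_T -> 'cV[R]_n)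
  (h : 'I_T -> R) (t : 'I_T) (alpha : R) (y : 'cV[R]_n) (xi : 'cV[R]_m) : R :=
  dotv (A t *m y + alpha *: a t) xi + dotv (b t) y + h t * alpha.

Definition Gf (R : realType) (m n T : nat) (Xi : set 'cV[R]_m)
  (A : 'I_T -> 'M[R]_(m, n)) (a : 'I_T -> 'cV[R]_m) (b : 'I_T -> 'cV[R]_n)
  (h : 'I_T -> R) (t : 'I_T) (z : 'cV[R]_m) (alpha : R) (x : 'cV[R]_n)
  : \bar R :=
  ereal_sup [set (dotv z xi - alpha * fpiece A a b h t x xi)%:E | xi in Xi].

Definition systemC2 (R : realType) (m n T N : nat) (nrm : 'cV[R]_m -> R)
  (Xi : set 'cV[R]_m) (zeta : 'I_N -> 'cV[R]_m) (eps delta : R)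
  (A : 'I_T -> 'M[R]_(m, n)) (a : 'I_T -> 'cV[R]_m) (b : 'I_T -> 'cV[R]_n)
  (h : 'I_T -> R)
  (lam : R) (s : 'I_N -> R) (z : 'I_N -> 'I_T -> 'cV[R]_m)
  (alpha : 'I_T -> R) (x : 'cV[R]_n) : Prop :=
  [/\ 0 <= lam, (forall t, 0 <= alpha t) & (forall i, 0 <= s i)] /\
  [/\ lam * delta + (N%:R)^-1 * \sum_(i < N) s i <= eps,
      (forall i t, (Gf Xi A a b h t (z i t) (alpha t) x
                    + (1 - dotv (z i t) (zeta i) - s i)%:E <= 0)%E)
    & (forall i t, dual_norm nrm (z i t) <= lam)].

Definition ZC2 (R : realType) (m n T N : nat) (nrm : 'cV[R]_m -> R)
  (Xi : set 'cV[R]_m) (zeta : 'I_N -> 'cV[R]_m) (eps delta : R)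
  (A : 'I_T -> 'M[R]_(m, n)) (a : 'I_T -> 'cV[R]_m) (b : 'I_T -> 'cV[R]_n)
  (h : 'I_T -> R) : set 'cV[R]_n :=
  [set x | exists lam s z alpha,
           systemC2 nrm Xi zeta eps delta A a b h lam s z alpha x].

Definition ZhatC2 (R : realType) (m n T N : nat) (nrm : 'cV[R]_m -> R)
  (Xi : set 'cV[R]_m) (zeta : 'I_N -> 'cV[R]_m) (eps delta : R)
  (A : 'I_T -> 'M[R]_(m, n)) (a : 'I_T -> 'cV[R]_m) (b : 'I_T -> 'cV[R]_n)
  (h : 'I_T -> R) (M : 'I_T -> R) : set 'cV[R]_n :=
  [set x | exists (lam : R) (s : 'I_N -> R) (z : 'I_N -> 'I_T -> 'cV[R]_m)
                  (alpha : 'I_T -> R) (y : 'I_T -> 'cV[R]_n),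
     [/\ 0 <= lam, (forall t, 0 <= alpha t) & (forall i, 0 <= s i)] /\
     [/\ lam * delta + (N%:R)^-1 * \sum_(i < N) s i <= eps,
         (forall i t,
            (ereal_sup [set (dotv (z i t) xi - fhat A a b h t (alpha t) (y t) xi)%:E
                       | xi in Xi]
             + (1 - dotv (z i t) (zeta i) - s i)%:E <= 0)%E),
         (forall r t, 0 <= y t r 0 /\ y t r 0 <= M t * x r 0),
         (forall r t, alpha t - M t * (1 - x r 0) <= y t r 0 /\ y t r 0 <= alpha t)
       & (forall i t, dual_norm nrm (z i t) <= lam)]].

Definition ZD (R : realType) (m n T N : nat) (nrm : 'cV[R]_m -> R)
  (Xi : set 'cV[R]_m) (zeta : 'I_N -> 'cV[R]_m) (eps delta : R)
  (A : 'I_T -> 'M[R]_(m, n)) (a : 'I_T -> 'cV[R]_m) (b : 'I_T -> 'cV[R]_n)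
  (h : 'I_T -> R) : set 'cV[R]_n :=
  [set x | ((1 - eps)%:E <=
     ereal_inf [set P ([set xi : Rvec R m | forall t, (0 <= fpiece A a b h t x xi)%R])
               | P in ambiguity_set nrm Xi zeta delta])%E].

(* On binary points the McCormick constraints force y^t = alpha_t x, and
   fhat_t((alpha, alpha x), xi) = alpha f_t(x, xi), so the two systems describe the
   same points of S; the lifted set is convex because fhat is linear in
   (alpha, y) and the dual norm is convex.
   For the inclusion in Z_D, a feasible (lambda, s, z, alpha) gives, through the
   dual norm, 1 - s_i <= lambda ||xi - zeta^i|| for every xi in Xi violating some
   constraint and every sample i.  Integrating this bound against a coupling of P
   with the empirical distribution bounds P(violation) by
   lambda * (transport cost) + (1/N) sum_i s_i; letting the cost approach
   W(P, P_N) <= delta gives P(violation) <= lambda delta + (1/N) sum_i s_i <= eps. *)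

From HB Require Import structures.
From mathcomp Require Import all_boot all_order all_algebra.
From mathcomp Require Import all_classical all_reals all_analysis.
From mathcomp Require Import ring lra measurable_realfun.
Import Order.TTheory GRing.Theory Num.Theory.
Import numFieldNormedType.Exports.
Local Open Scope classical_set_scope.
Local Open Scope ring_scope.

Section DotProduct.
Variables (R : realType) (k : nat).
Implicit Types (u v w : 'cV[R]_k).

Lemma dotvDl u v w : dotv (u + v) w = dotv u w + dotv v w.
Proof. by rewrite /dotv -big_split; apply: eq_bigr => i _; rewrite mxE mulrDl. Qed.

Lemma dotvDr u v w : dotv w (u + v) = dotv w u + dotv w v.
Proof. by rewrite /dotv -big_split; apply: eq_bigr => i _; rewrite mxE mulrDr. Qed.

Lemma dotvZl (c : R) u w : dotv (c *: u) w = c * dotv u w.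
Proof. by rewrite /dotv mulr_sumr; apply: eq_bigr => i _; rewrite mxE mulrA. Qed.

Lemma dotvZr (c : R) u w : dotv w (c *: u) = c * dotv w u.
Proof. by rewrite /dotv mulr_sumr; apply: eq_bigr => i _; rewrite mxE mulrCA. Qed.

Lemma dotvBr u v w : dotv w (u - v) = dotv w u - dotv w v.
Proof. by rewrite dotvDr -scaleN1r dotvZr mulN1r. Qed.

Lemma dotv0r w : dotv w 0 = 0.
Proof. by rewrite -(scale0r 0) dotvZr mul0r. Qed.

End DotProduct.

Section Perspective.
Variables (R : realType) (m n T : nat).
Variables (A : 'I_T -> 'M[R]_(m, n)) (a : 'I_T -> 'cV[R]_m).
Variables (b : 'I_T -> 'cV[R]_n) (h : 'I_T -> R).

Lemma fhat_scaleE t (al : R) x xi :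
  fhat A a b h t al (al *: x) xi = al * fpiece A a b h t x xi.
Proof. by rewrite /fhat /fpiece -scalemxAr -scalerDr !dotvZl dotvZr; ring. Qed.

Lemma fhat_convex t (l al1 al2 : R) y1 y2 xi :
  fhat A a b h t (l * al1 + (1 - l) * al2) (l *: y1 + (1 - l) *: y2) xi =
  l * fhat A a b h t al1 y1 xi + (1 - l) * fhat A a b h t al2 y2 xi.
Proof.
rewrite /fhat mulmxDr -!scalemxAr scalerDl !dotvDl !dotvZl !dotvDr !dotvZr.
ring.
Qed.

End Perspective.

Lemma ereal_sup_addr_le0P {R : realType} {X : Type} (D : set X) (F : X -> R)
    (c : R) :
  (ereal_sup [set (F x)%:E | x in D] + c%:E <= 0)%E <->
  (forall x, D x -> F x + c <= 0).
Proof.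
split=> [supF x Dx | Fc].
- have Fx : ((F x)%:E <= ereal_sup [set (F x)%:E | x in D])%E.
    by apply: ereal_sup_ubound; exists x.
  by rewrite -lee_fin EFinD (le_trans _ supF) // leeD2r.
- have supF : (ereal_sup [set (F x)%:E | x in D] <= (- c)%:E)%E.
    by apply: ge_ereal_sup => _ [x Dx <-]; rewrite lee_fin; have := Fc x Dx; lra.
  by move: supF => /(leeD2r c%:E); rewrite -EFinD addNr.
Qed.

Lemma mxentry_le_norm {R : realType} {p q} (M : 'M[R]_(p, q)) i j :
  `|M i j| <= `|M|.
Proof.
by rewrite -[`|M|]/(mx_norm M) mx_normrE; apply/bigmax_geP; right; exists (i, j).
Qed.

Lemma lipschitz_continuous {R : realType} {V : normedModType R} (f : V -> R)
    (K : R) :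
  0 <= K -> (forall x y, `|f x - f y| <= K * `|x - y|) -> continuous f.
Proof.
move=> K0 fK x; apply/(@cvgrPdist_lt _ R^o) => e e0; apply/nbhs_normP.
have K1 : 0 < K + 1 by rewrite ltr_wpDl.
exists (e / (K + 1)) => /=; first by rewrite divr_gt0.
move=> y /= xy; apply: le_lt_trans (fK x y) _.
apply: le_lt_trans (_ : (K + 1) * `|x - y| < e).
  by rewrite ler_wpM2r // lerDl.
by rewrite mulrC -ltr_pdivlMr.
Qed.

Section Norm.
Context {R : realType} {m : nat} {nrm : 'cV[R]_m -> R} (nrmP : is_norm nrm).

Lemma nrm_ge0 x : 0 <= nrm x.
Proof. by case: nrmP. Qed.

Lemma nrmZ (c : R) x : nrm (c *: x) = `|c| * nrm x.
Proof. by case: nrmP. Qed.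

Lemma nrm_triangle x y : nrm (x + y) <= nrm x + nrm y.
Proof. by case: nrmP. Qed.

Lemma nrm0 : nrm 0 = 0.
Proof. by rewrite -(scale0r 0) nrmZ normr0 mul0r. Qed.

Lemma nrm_eq0 x : (nrm x == 0) = (x == 0).
Proof.
by apply/eqP/eqP => [|->]; [case: nrmP => _ eq0 _ _; exact: eq0 | exact: nrm0].
Qed.

Lemma nrm_gt0 x : (0 < nrm x) = (x != 0).
Proof. by rewrite lt_neqAle nrm_ge0 andbT eq_sym nrm_eq0. Qed.

Lemma nrmN x : nrm (- x) = nrm x.
Proof. by rewrite -scaleN1r nrmZ normrN1 mul1r. Qed.

Lemma nrm_sub_ge x y : `|nrm x - nrm y| <= nrm (x - y).
Proof.
have := nrm_triangle (x - y) y; have := nrm_triangle (y - x) x.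
rewrite !subrK -opprB nrmN ler_norml => *; apply/andP; split; lra.
Qed.

Lemma nrm_sum k (F : 'I_k -> 'cV[R]_m) : nrm (\sum_i F i) <= \sum_i nrm (F i).
Proof.
elim/big_ind2 : _ => [|x1 x2 y1 y2 h1 h2|//]; first by rewrite nrm0.
exact: le_trans (nrm_triangle _ _) (lerD h1 h2).
Qed.

Lemma nrm_le_coord x : nrm x <= \sum_(i < m) `|x i 0| * nrm (delta_mx i 0).
Proof.
have xE : x = \sum_(i < m) x i 0 *: (delta_mx i 0 : 'cV[R]_m).
  apply/matrixP => i j; rewrite (ord1 j) summxE (bigD1 i) //= big1 ?addr0.
    by rewrite !mxE !eqxx mulr1.
  by move=> k /negbTE ki; rewrite !mxE eq_sym ki mulr0.
rewrite {1}xE; apply: le_trans (nrm_sum _ _) _; apply: ler_sum => i _.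
by rewrite nrmZ ler_wpM2r ?nrm_ge0 // ger0_norm ?normr_ge0 // mxE eqxx mulr1.
Qed.

Lemma continuous_nrm_tr : continuous (fun v : 'rV[R]_m => nrm v^T).
Proof.
apply: (@lipschitz_continuous _ _ _ (\sum_(i < m) nrm (delta_mx i 0))).
  by apply: sumr_ge0 => i _; exact: nrm_ge0.
move=> u w; apply: le_trans (nrm_sub_ge _ _) _; rewrite -linearB /=.
apply: le_trans (nrm_le_coord _) _; rewrite mulr_suml; apply: ler_sum => i _.
by rewrite mulrC ler_wpM2l ?nrm_ge0 // mxE mxentry_le_norm.
Qed.

(* [c] is the minimum of [nrm] over the unit sphere of the sup norm, which is
   compact. *)
Lemma nrm_ge_coord :
  exists2 c, 0 < c & forall (xi : 'cV[R]_m) (i : 'I_m), c * `|xi i 0| <= nrm xi.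
Proof.
have [m0|m_gt0] := posnP m.
  by exists 1 => // xi i; move: (ltn_ord i); rewrite {2}m0.
pose sphere := [set v : 'rV[R]_m | `|v| = 1].
have sphere_compact : compact sphere.
  apply: bounded_closed_compact; first by exists 1; split => // r r1 v /= ->; exact: ltW.
  apply: (@preimage_closed _ _ (fun v : 'rV[R]_m => `|v|) [set 1]) => [v _|].
    exact: norm_continuous.
  exact: closed_eq.
have sphere0 : sphere !=set0.
  pose u := const_mx 1 : 'rV[R]_m.
  have u0 : `|u| != 0.
    rewrite normr_eq0; apply/eqP => /matrixP /(_ 0 (Ordinal m_gt0)).
    by rewrite !mxE; apply/eqP; rewrite oner_eq0.
  by exists (`|u|^-1 *: u); rewrite /sphere /= normrZ ger0_norm ?invr_ge0 // mulVf.
have [v0] :=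
  EVT_min_rV sphere0 sphere_compact (continuous_subspaceT continuous_nrm_tr).
rewrite inE /sphere /= => v01 v0min.
have c0 : 0 < nrm v0^T.
  rewrite nrm_gt0; apply/eqP => /(congr1 trmx); rewrite trmxK trmx0 => v00.
  by move: v01; rewrite v00 normr0 => /eqP; rewrite eq_sym oner_eq0.
exists (nrm v0^T) => // xi i.
have [->|xi0] := eqVneq xi 0; first by rewrite mxE normr0 mulr0 nrm0.
have xiT0 : 0 < `|xi^T|.
  by rewrite normr_gt0; apply: contra xi0 => /eqP/(congr1 trmx); rewrite trmxK trmx0 => ->.
have xiT_inv : 0 <= `|xi^T|^-1 by rewrite invr_ge0 ltW.
have : nrm v0^T <= nrm (`|xi^T|^-1 *: xi^T)^T.
  by apply: v0min; rewrite inE /sphere /= normrZ ger0_norm // mulVf ?gt_eqF.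
rewrite linearZ /= trmxK nrmZ ger0_norm // => /(ler_wpM2r (ltW xiT0)).
rewrite mulrAC mulVf ?gt_eqF // mul1r; apply: le_trans.
by rewrite (ler_wpM2l (ltW c0)); move: (mxentry_le_norm xi^T 0 i); rewrite mxE.
Qed.

End Norm.

Section DualNorm.
Context {R : realType} {m : nat} {nrm : 'cV[R]_m -> R} (nrmP : is_norm nrm).

Lemma dual_norm_has_sup (z : 'cV[R]_m) :
  has_sup [set dotv z xi | xi in [set xi | nrm xi <= 1]].
Proof.
have [c c0 c_le] := nrm_ge_coord nrmP.
split; first by exists 0, 0; rewrite /= ?(nrm0 nrmP) ?dotv0r.
exists (\sum_(i < m) `|z i 0| / c) => _ [xi /= xi1 <-].
apply: le_trans (ler_norm _) _; apply: le_trans (ler_norm_sum _ _ _) _.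
apply: ler_sum => i _; rewrite normrM ler_wpM2l // -(ler_pM2l c0) mulfV ?gt_eqF //.
exact: le_trans (c_le xi i) _.
Qed.

Lemma dual_norm_ub (z xi : 'cV[R]_m) :
  nrm xi <= 1 -> dotv z xi <= dual_norm nrm z.
Proof.
by move=> xi1; apply: sup_upper_bound; [exact: dual_norm_has_sup | exists xi].
Qed.

Lemma dotv_le_dual_norm (z xi : 'cV[R]_m) : dotv z xi <= dual_norm nrm z * nrm xi.
Proof.
have [->|xi0] := eqVneq xi 0; first by rewrite dotv0r (nrm0 nrmP) mulr0.
have xi_gt0 : 0 < nrm xi by rewrite (nrm_gt0 nrmP).
have := dual_norm_ub z ((nrm xi)^-1 *: xi).
rewrite dotvZr (nrmZ nrmP) ger0_norm ?invr_ge0 ?(nrm_ge0 nrmP) // mulVf ?gt_eqF // lexx.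
by rewrite ler_pdivrMl // mulrC => /(_ isT).
Qed.

Lemma dual_norm_convex (l : R) (z1 z2 : 'cV[R]_m) : 0 <= l <= 1 ->
  dual_norm nrm (l *: z1 + (1 - l) *: z2)
  <= l * dual_norm nrm z1 + (1 - l) * dual_norm nrm z2.
Proof.
move=> /andP[l0 l1]; apply: ge_sup.
  by case: (dual_norm_has_sup (l *: z1 + (1 - l) *: z2)).
move=> _ [xi /= xi1 <-]; rewrite dotvDl !dotvZl.
by apply: lerD; apply: ler_wpM2l; rewrite ?subr_ge0 // dual_norm_ub.
Qed.

End DualNorm.

Lemma mccormick_binary_eq {R : realFieldType} {M al x y : R} :
  x = 0 \/ x = 1 -> 0 <= y -> y <= M * x -> al - M * (1 - x) <= y -> y <= al ->
  y = al * x.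
Proof.
by case=> ->; rewrite ?subr0 ?subrr ?mulr0 ?mulr1 => *;
  apply/eqP; rewrite eq_le; apply/andP; split; lra.
Qed.

Lemma mccormick_binary_feasible {R : realFieldType} {M al x : R} :
  x = 0 \/ x = 1 -> 0 <= al -> al <= M ->
  (0 <= al * x /\ al * x <= M * x) /\
  (al - M * (1 - x) <= al * x /\ al * x <= al).
Proof. by case=> ->; rewrite ?subr0 ?subrr ?mulr0 ?mulr1 => *; split; split; lra. Qed.

Section Reformulation.
Variables (R : realType) (m n T N : nat) (nrm : 'cV[R]_m -> R).
Variables (Xi : set 'cV[R]_m) (zeta : 'I_N -> 'cV[R]_m) (eps delta : R).
Variables (A : 'I_T -> 'M[R]_(m, n)) (a : 'I_T -> 'cV[R]_m).
Variables (b : 'I_T -> 'cV[R]_n) (h : 'I_T -> R) (M : 'I_T -> R).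

Lemma Gf_fhatE (t : 'I_T) (z : 'cV[R]_m) (al : R) (x : 'cV[R]_n) :
  Gf Xi A a b h t z al x =
  ereal_sup [set (dotv z xi - fhat A a b h t al (al *: x) xi)%:E | xi in Xi].
Proof. by congr ereal_sup; apply: eq_imagel => xi _; rewrite fhat_scaleE. Qed.

Lemma ZhatC2_sub_ZC2 (x : 'cV[R]_n) : (forall r, x r 0 = 0 \/ x r 0 = 1) ->
  ZhatC2 nrm Xi zeta eps delta A a b h M x -> ZC2 nrm Xi zeta eps delta A a b h x.
Proof.
move=> x01 [lam [s [z [al [y [sgn [budget Hz Hy1 Hy2 Hdual]]]]]]].
have yE t : y t = al t *: x.
  apply/matrixP => r j; rewrite (ord1 j) mxE.
  have [y_ge0 y_le] := Hy1 r t; have [y_ge y_le_al] := Hy2 r t.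
  exact: mccormick_binary_eq (x01 r) y_ge0 y_le y_ge y_le_al.
exists lam, s, z, al; split => //; split => // i t.
by rewrite Gf_fhatE -yE; exact: Hz.
Qed.

Lemma ZC2_sub_ZhatC2 (x : 'cV[R]_n) : (forall r, x r 0 = 0 \/ x r 0 = 1) ->
  (forall lam s z alpha,
     systemC2 nrm Xi zeta eps delta A a b h lam s z alpha x ->
     forall t, alpha t <= M t) ->
  ZC2 nrm Xi zeta eps delta A a b h x -> ZhatC2 nrm Xi zeta eps delta A a b h M x.
Proof.
move=> x01 alM [lam [s [z [al sys]]]].
have al_le := alM _ _ _ _ sys.
move: sys => [[lam0 al0 s0] [budget Hz Hdual]].
exists lam, s, z, al, (fun t => al t *: x); split => //; split => // [i t|r t|r t].
- by rewrite -Gf_fhatE.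
- by rewrite mxE; case: (mccormick_binary_feasible (x01 r) (al0 t) (al_le t)).
- by rewrite mxE; case: (mccormick_binary_feasible (x01 r) (al0 t) (al_le t)).
Qed.

Section Convexity.
Local Open Scope convex_scope.

Lemma ZhatC2_convex : is_norm nrm ->
  convex_set (ZhatC2 nrm Xi zeta eps delta A a b h M
                : set (convex_lmodType 'cV[R]_n)).
Proof.
move=> nrmP x1 x2 l; rewrite !inE.
have -> : x1 <| l |> x2 = l%:num *: (x1 : 'cV[R]_n) + (1 - l%:num) *: x2 by [].
have t0 : 0 <= l%:num by [].
have t1 : l%:num <= 1 by [].
move: (l%:num) t0 t1 => t t0 t1.
move=> [lam1 [s1 [z1 [al1 [y1 [[lam10 al10 s10] [budget1 Hz1 Hy11 Hy21 Hdual1]]]]]]].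
move=> [lam2 [s2 [z2 [al2 [y2 [[lam20 al20 s20] [budget2 Hz2 Hy12 Hy22 Hdual2]]]]]]].
exists (t * lam1 + (1 - t) * lam2), (fun i => t * s1 i + (1 - t) * s2 i),
  (fun i k => t *: z1 i k + (1 - t) *: z2 i k),
  (fun k => t * al1 k + (1 - t) * al2 k),
  (fun k => t *: y1 k + (1 - t) *: y2 k).
split; first split.
- by nra.
- by move=> k; have := al10 k; have := al20 k; nra.
- by move=> i; have := s10 i; have := s20 i; nra.
split.
- rewrite big_split /= -!mulr_sumr.
  have -> : (t * lam1 + (1 - t) * lam2) * delta +
     N%:R^-1 * (t * \sum_(i < N) s1 i + (1 - t) * \sum_(i < N) s2 i) =
     t * (lam1 * delta + N%:R^-1 * \sum_(i < N) s1 i) +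
     (1 - t) * (lam2 * delta + N%:R^-1 * \sum_(i < N) s2 i) by ring.
  by nra.
- move=> i k; apply/ereal_sup_addr_le0P => xi Xxi.
  have /ereal_sup_addr_le0P/(_ xi Xxi) e1 := Hz1 i k.
  have /ereal_sup_addr_le0P/(_ xi Xxi) e2 := Hz2 i k.
  by rewrite fhat_convex !dotvDl !dotvZl; nra.
- move=> r k; rewrite !mxE.
  move: (Hy11 r k) (Hy12 r k) => [e1 e2] [e3 e4]; split; first by nra.
  by rewrite mulrDr !mulrA ![M k * _]mulrC; nra.
- move=> r k; rewrite !mxE.
  move: (Hy21 r k) (Hy22 r k) => [e1 e2] [e3 e4]; split; last by nra.
  have -> : t * al1 k + (1 - t) * al2 k
              - M k * (1 - (t * x1 r 0 + (1 - t) * x2 r 0))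
    = t * (al1 k - M k * (1 - x1 r 0)) + (1 - t) * (al2 k - M k * (1 - x2 r 0)).
    by ring.
  by nra.
- move=> i k; have t01 : 0 <= t <= 1 by rewrite t0 t1.
  apply: le_trans (dual_norm_convex nrmP _ _ _ t01) _.
  by have := Hdual1 i k; have := Hdual2 i k; nra.
Qed.

End Convexity.

End Reformulation.

Lemma bigsetU_ordP {X : Type} {n : nat} (F : 'I_n -> set X) x :
  (\big[setU/set0]_(i < n) F i) x <-> exists i, F i x.
Proof.
split=> [|[i Fi]]; last by rewrite (bigD1 i) //=; left.
by elim/big_rec : _ => [//|i B _ IH [Fi|/IH //]]; exists i.
Qed.

Section SampleCells.
Context {d : measure_display} {X : measurableType d} {R : realType} {N : nat}.
Variables (zeta : 'I_N -> X) (s : 'I_N -> R).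

(* Repeated samples share a single cell, owned by an index of least weight [s];
   this is what makes [sum_sample_cells] hold. *)
Definition sample_rep (v : X) : option 'I_N :=
  if [pick j | `[< zeta j = v >]] is Some j0
  then Some [arg min_(j < j0 | `[< zeta j = v >]) s j]%O else None.

Definition sample_cell (j : 'I_N) : set X := [set v | sample_rep v = Some j].

Lemma sample_cell_eq j v : sample_cell j v -> v = zeta j.
Proof.
rewrite /sample_cell /sample_rep /=; case: pickP => // j0 zj0 [<-].
by case: arg_minP => // k /asboolP.
Qed.

Lemma sample_repP i : exists2 j, sample_cell j (zeta i) & s j <= s i.
Proof.
rewrite /sample_cell /sample_rep /=.
case: pickP => [j0 zj0|/(_ i)]; last by rewrite asboolT.
by eexists; first by []; case: arg_minP => // k _; apply; exact/asboolP.
Qed.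

Lemma sample_cell_inj i j v : sample_cell i v -> sample_cell j v -> i = j.
Proof. by rewrite /sample_cell /= => -> []. Qed.

Lemma measurable_sample_cell j :
  (forall i, measurable [set zeta i]) -> measurable (sample_cell j).
Proof.
move=> msample; have [cj|ncj] := pselect (sample_cell j (zeta j)).
  suff -> : sample_cell j = [set zeta j] by [].
  by apply/seteqP; split => v; [exact: sample_cell_eq | move=> ->].
suff -> : sample_cell j = set0 by [].
by apply/seteqP; split => v // /[dup] /sample_cell_eq -> /ncj.
Qed.

Lemma sum_sample_cells :
  \sum_(j < N) s j * ((N%:R)^-1 * \sum_(i < N) \1_(sample_cell j) (zeta i))
  <= (N%:R)^-1 * \sum_(i < N) s i.
Proof.
under eq_bigr do rewrite mulrCA mulr_sumr.
rewrite -mulr_sumr exchange_big /= ler_wpM2l // ?invr_ge0 //.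
apply: ler_sum => i _; have [j cell_j s_j] := sample_repP i.
rewrite (bigD1 j) //= big1 ?addr0 => [|k kj]; first by rewrite indicE mem_set ?mulr1.
rewrite indicE memNset ?mulr0 // => cell_k.
by move/eqP: kj; apply; exact: sample_cell_inj cell_k cell_j.
Qed.

End SampleCells.

(* No measurability of [g] is needed: the integral of a nonnegative function is
   a supremum over the simple functions below it. *)
Lemma ge0_le_integralT {d : measure_display} {X : measurableType d} {R : realType}
    (mu : {measure set X -> \bar R}) (f g : X -> \bar R) :
  (forall x, (0 <= f x)%E) -> (forall x, (f x <= g x)%E) ->
  (\int[mu]_x f x <= \int[mu]_x g x)%E.
Proof.
move=> f0 fg; have g0 x : (0 <= g x)%E := le_trans (f0 x) (fg x).
rewrite !ge0_integralTE //; apply: le_ereal_sup => _ [k kf <-].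
by exists k => //= x; exact: le_trans (kf x) (fg x).
Qed.

Lemma ge0_le_integral_scale {d : measure_display} {X : measurableType d}
    {R : realType} (mu : {measure set X -> \bar R}) {f g : X -> R} {k : R} :
  measurable_fun setT f -> 0 <= k -> (forall x, 0 <= f x) ->
  (forall x, f x <= k * g x) ->
  (\int[mu]_x (f x)%:E <= k%:E * \int[mu]_x (g x)%:E)%E.
Proof.
move=> mf k0 f0 fg; have [k_eq0|k_neq0] := eqVneq k 0.
  rewrite k_eq0 mul0e -(integral0 mu setT); apply: ge0_le_integralT => x.
    by rewrite lee_fin.
  by rewrite lee_fin -(mul0r (g x)) -k_eq0.
have k_gt0 : 0 < k by rewrite lt_neqAle eq_sym k_neq0.
have fE : (fun x => (f x)%:E) = (fun x => k%:E * (k^-1 * f x)%:E)%E.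
  by apply/funext => x; rewrite -EFinM mulrA mulfV // mul1r.
rewrite fE ge0_integralZl_EFin //; first last.
- by apply/measurable_EFinP/measurable_funM => //; exact: measurable_cst.
- by move=> x _; rewrite lee_fin mulr_ge0 ?invr_ge0 // ltW.
rewrite lee_pmul2l ?lte_fin //; apply: ge0_le_integralT => x.
  by rewrite lee_fin mulr_ge0 ?invr_ge0 // ltW.
by rewrite lee_fin ler_pdivrMl.
Qed.

Section EmpiricalCoupling.
Context {d : measure_display} {X : measurableType d} {R : realType} {N : nat}.
Variables (zeta : 'I_N -> X) (s : 'I_N -> R) (pi : probability (X * X)%type R).
Variables (c : X -> X -> R) (lam w : R) (D : set X).
Hypotheses (s_ge0 : forall i, 0 <= s i) (lam_ge0 : 0 <= lam).
Hypothesis c_ge0 : forall u v, 0 <= c u v.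
Hypothesis measurable_sample : forall i, measurable [set zeta i].
Hypothesis mD : measurable D.
Hypothesis pi_snd : forall B, measurable B ->
  pi (setT `*` B) = ((N%:R)^-1 * \sum_(i < N) \1_B (zeta i))%:E.
Hypothesis pi_cost : (\int[pi]_p (c p.1 p.2)%:E)%E = w%:E.
Hypothesis cost_bound : forall xi i, D xi -> 1 - s i <= lam * c xi (zeta i).

Let cell := sample_cell zeta s.
Let pr (E : set (X * X)) := fine (pi E).

Let mcell j : measurable (cell j).
Proof. exact: measurable_sample_cell. Qed.

Let prE E : measurable E -> pi E = (pr E)%:E.
Proof. by move=> mE; rewrite fineK // fin_num_measure. Qed.

Lemma coupling_le_sum_cells : pr (D `*` setT) <= \sum_(j < N) pr (D `*` cell j).
Proof.
pose supp := \big[setU/set0]_(j < N) cell j.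
have msupp : measurable supp by apply: bigsetU_measurable => j _; exact: mcell.
have null : pi (setT `*` ~` supp) = 0%E.
  rewrite pi_snd; last exact: measurableC.
  rewrite big1 ?mulr0 // => i _; rewrite indicE memNset // => /=.
  by have [j cj _] := sample_repP zeta s i; apply; apply/bigsetU_ordP; exists j.
have cover :
    D `*` setT `<=` \big[setU/set0]_(j < N) (D `*` cell j) `|` setT `*` ~` supp.
  move=> [xi v] [/= Dxi _]; have [/bigsetU_ordP[j cj]|nsupp] := pselect (supp v).
    by left; apply/bigsetU_ordP; exists j.
  by right.
have mcells : measurable (\big[setU/set0]_(j < N) (D `*` cell j)).
  by apply: bigsetU_measurable => j _; exact: measurableX mD (mcell j).
rewrite -lee_fin -sumEFin -prE; last exact: measurableX.
apply: le_trans (le_measure _ _ _ cover) _; rewrite ?inE.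
- exact: measurableX.
- by apply: measurableU => //; apply: measurableX => //; exact: measurableC.
apply: le_trans (measureU2 _ _ _) _ => //.
  by apply: measurableX => //; exact: measurableC.
rewrite [X in (_ + X)%E]null adde0 measure_bigsetU_ord.
- by apply: lee_sum => j _; rewrite -prE //; exact: measurableX mD (mcell j).
- by move=> j; exact: measurableX mD (mcell j).
- by move=> i j _ _ [[xi v] [[_ ci] [_ cj]]]; exact: sample_cell_inj ci cj.
Qed.

Lemma sum_cells_transport :
  \sum_(j < N) Num.max (1 - s j) 0 * pr (D `*` cell j) <= lam * w.
Proof.
pose f p := \sum_(j < N) Num.max (1 - s j) 0 * \1_(D `*` cell j) p.
have max_ge0 j : 0 <= Num.max (1 - s j) 0 by rewrite le_max lexx orbT.
have f_ge0 p : 0 <= f p.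
  by apply: sumr_ge0 => j _; rewrite mulr_ge0.
have mf : measurable_fun setT f.
  apply: measurable_sum => j; apply: measurable_funM; first exact: measurable_cst.
  exact: measurable_indic (measurableX mD (mcell j)).
have f_le p : f p <= lam * c p.1 p.2.
  have [[j Dcj]|nocell] := pselect (exists j, (D `*` cell j) p).
    rewrite /f (bigD1 j) //= big1 ?addr0 => [|k kj]; last first.
      rewrite indicE memNset ?mulr0 // => -[_ ck]; move: Dcj => [_ cj].
      by move/eqP: kj; apply; exact: sample_cell_inj ck cj.
    rewrite indicE mem_set // mulr1.
    case: p Dcj => xi v [/= Dxi /sample_cell_eq ->].
    by rewrite ge_max cost_bound //= mulr_ge0.
  rewrite /f big1 => [|j _]; first by rewrite mulr_ge0.
  by rewrite indicE memNset ?mulr0 // => Dcj; apply: nocell; exists j.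
have := ge0_le_integral_scale pi mf lam_ge0 f_ge0 f_le; rewrite pi_cost -EFinM.
under eq_integral do rewrite /f -sumEFin.
rewrite ge0_integral_sum //; first last.
- by move=> j p _; rewrite lee_fin mulr_ge0.
- move=> j; apply/measurable_EFinP/measurable_funM; first exact: measurable_cst.
  exact: measurable_indic (measurableX mD (mcell j)).
have int_term j :
    (\int[pi]_p (Num.max (1 - s j) 0 * \1_(D `*` cell j) p)%:E =
     (Num.max (1 - s j) 0 * pr (D `*` cell j))%:E)%E.
  under eq_integral do rewrite EFinM.
  rewrite ge0_integralZl_EFin //.
  - have mE := measurableX mD (mcell j).
    by rewrite integral_indic // setIT EFinM -prE.
  - apply/measurable_EFinP; exact: measurable_indic (measurableX mD (mcell j)).
by rewrite (eq_bigr _ (fun j _ => int_term j)) sumEFin lee_fin.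
Qed.

Lemma sum_cells_sample :
  \sum_(j < N) s j * pr (setT `*` cell j) <= (N%:R)^-1 * \sum_(i < N) s i.
Proof.
by under eq_bigr => j _ do rewrite /pr pi_snd //=; exact: sum_sample_cells.
Qed.

Lemma coupling_bound : pr (D `*` setT) <= lam * w + (N%:R)^-1 * \sum_(i < N) s i.
Proof.
apply: le_trans coupling_le_sum_cells _.
apply: le_trans (lerD sum_cells_transport sum_cells_sample); rewrite -big_split.
apply: ler_sum => j _ /=; have mE := measurableX mD (mcell j).
have pr_ge0 : 0 <= pr (D `*` cell j) by rewrite -lee_fin -prE.
have pr_le : pr (D `*` cell j) <= pr (setT `*` cell j).
  rewrite -lee_fin -!prE //; last exact: measurableX.
  by apply: le_measure; rewrite ?inE //; [exact: measurableX | move=> [] /= ? ? []].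
(* p <= (1 - s_j)^+ p + s_j q whenever 0 <= p <= q *)
by have := s_ge0 j; case: (leP (1 - s j) 0) => ? ?; nra.
Qed.

End EmpiricalCoupling.

Lemma le_affine_ereal_inf {R : realType} {E : set (\bar R)} {lam delta c b : R} :
  (forall e, E e -> (0 <= e)%E) -> (ereal_inf E <= delta%:E)%E -> 0 <= lam ->
  (forall w, E w%:E -> b <= lam * w + c) -> b <= lam * delta + c.
Proof.
move=> E_ge0 infE lam0 Eb; apply/ler_addgt0Pr => e e0.
have lam1 : 0 < lam + 1 by rewrite ltr_wpDl.
have eta0 : 0 < e / (lam + 1) by rewrite divr_gt0.
have lam_eta : lam * (e / (lam + 1)) <= e.
  by rewrite mulrA ler_pdivrMr //; nra.
have /ereal_inf_lt[[w| |] Ew w_lt] :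
    (ereal_inf E < (delta + e / (lam + 1))%:E)%E.
- by apply: le_lt_trans infE _; rewrite lte_fin ltrDl.
- move: w_lt; rewrite lte_fin => w_lt.
  apply: le_trans (Eb w Ew) _; have := ler_wpM2l lam0 (ltW w_lt); nra.
- by [].
- by have := E_ge0 _ Ew.
Qed.

Lemma probability_setI_full {d : measure_display} {X : measurableType d}
    {R : realType} (P : probability X R) (E F : set X) :
  measurable E -> measurable F -> P F = 1%E -> (P E <= P (E `&` F))%E.
Proof.
move=> mE mF PF; have PnF : P (~` F) = 0%E by rewrite probability_setC // PF subee.
apply: le_trans (_ : P (E `&` F `|` ~` F) <= _)%E.
  apply: le_measure; rewrite ?inE //.
    by apply: measurableU; [exact: measurableI | exact: measurableC].
  by move=> x Ex; have [Fx|nFx] := pselect (F x); [left|right].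
apply: le_trans (measureU2 _ _ _) _; [exact: measurableI | exact: measurableC |].
by rewrite [X in (_ + X)%E]PnF adde0.
Qed.

Lemma closed_measurable_Rvec {R : realType} {m : nat} {C : set 'cV[R]_m} :
  closed C -> measurable (C : set (Rvec R m)).
Proof.
move=> cC; rewrite -(setCK C); apply: measurableC.
by apply: sub_sigma_algebra; exact: closed_openC.
Qed.

Section Feasibility.
Variables (R : realType) (m n T N : nat) (nrm : 'cV[R]_m -> R).
Variables (Xi : set 'cV[R]_m) (zeta : 'I_N -> 'cV[R]_m) (eps delta : R).
Variables (A : 'I_T -> 'M[R]_(m, n)) (a : 'I_T -> 'cV[R]_m).
Variables (b : 'I_T -> 'cV[R]_n) (h : 'I_T -> R).

Lemma continuous_fpiece t x : continuous (fpiece A a b h t x).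
Proof.
apply: (@lipschitz_continuous _ _ _ (\sum_(i < m) `|(A t *m x + a t) i 0|)).
  by apply: sumr_ge0 => i _.
move=> u v; have -> : fpiece A a b h t x u - fpiece A a b h t x v =
    dotv (A t *m x + a t) (u - v) by rewrite /fpiece dotvBr; ring.
rewrite /dotv mulr_suml; apply: le_trans (ler_norm_sum _ _ _) _.
by apply: ler_sum => i _; rewrite normrM ler_wpM2l // mxentry_le_norm.
Qed.

Lemma closed_safe_set x :
  closed [set xi : 'cV[R]_m | forall t, 0 <= fpiece A a b h t x xi].
Proof.
have -> : [set xi | forall t, 0 <= fpiece A a b h t x xi] =
    \bigcap_(t in setT) (fpiece A a b h t x @^-1` [set r | 0 <= r]).
  by apply/seteqP; split => xi /= safe t; [move=> _ |]; exact: safe.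
apply: closed_bigI => t _; apply: preimage_closed; last exact: closed_ge.
by move=> xi _; exact: continuous_fpiece.
Qed.

Lemma systemC2_violation_cost lam s z alpha x xi i :
  is_norm nrm -> systemC2 nrm Xi zeta eps delta A a b h lam s z alpha x ->
  Xi xi -> ~ (forall t, 0 <= fpiece A a b h t x xi) ->
  1 - s i <= lam * nrm (xi - zeta i).
Proof.
move=> nrmP [[_ al0 _] [_ Hz Hdual]] Xxi /existsNP[t /negP].
rewrite -ltNge => f_lt0.
have := Hz i t; rewrite /Gf => /ereal_sup_addr_le0P/(_ xi Xxi) cons.
have := dotv_le_dual_norm nrmP (z i t) (zeta i - xi).
rewrite dotvBr -[zeta i - xi]opprB (nrmN nrmP) => dual.
have : dual_norm nrm (z i t) * nrm (xi - zeta i) <= lam * nrm (xi - zeta i).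
  by rewrite ler_wpM2r ?(nrm_ge0 nrmP).
have : alpha t * fpiece A a b h t x xi <= 0 by rewrite mulr_ge0_le0 // ltW.
lra.
Qed.

Lemma ZC2_sub_ZD : is_norm nrm -> closed Xi ->
  ZC2 nrm Xi zeta eps delta A a b h `<=` ZD nrm Xi zeta eps delta A a b h.
Proof.
move=> nrmP cXi x [lam [s [z [al sys]]]]; have [[lam0 _ s0] [budget _ _]] := sys.
pose G : set (Rvec R m) := [set xi | forall t, 0 <= fpiece A a b h t x xi].
pose D : set (Rvec R m) := ~` G `&` Xi.
have mG : measurable G := closed_measurable_Rvec (closed_safe_set x).
have mXi : measurable (Xi : set (Rvec R m)) := closed_measurable_Rvec cXi.
have mD : measurable D by apply: measurableI => //; exact: measurableC.
apply: le_ereal_inf_tmp => _ [P [PXi PW] <-].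
have finP E : measurable E -> P E = (fine (P E))%:E.
  by move=> mE; rewrite fineK // fin_num_measure.
suff PnG_le : fine (P (~` G)) <= eps.
  rewrite -/G -[G]setCK probability_setC; last exact: measurableC.
  by rewrite finP ?lee_fin; [lra | exact: measurableC].
have PnG_D : fine (P (~` G)) <= fine (P D).
  rewrite -lee_fin -!finP //; last exact: measurableC.
  by apply: probability_setI_full => //; exact: measurableC.
apply: le_trans PnG_D (le_trans _ budget).
apply: (le_affine_ereal_inf _ PW) => // [_ [pi _ <-]|w [pi cpl pi_cost]].
  by apply: integral_ge0 => p _; rewrite lee_fin (nrm_ge0 nrmP).
have [<- _] := cpl D mD.
apply: (@coupling_bound _ (Rvec R m) _ _ zeta s pi
          (fun u v => nrm ((u : 'cV[R]_m) - v))) => //.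
- by move=> u v; case: nrmP.
- move=> i; apply: closed_measurable_Rvec.
  exact/accessible_closed_set1/hausdorff_accessible/norm_hausdorff.
- by move=> B mB; have [_ ->] := cpl B mB.
- by move=> xi i [nG Xxi]; exact: systemC2_violation_cost sys Xxi nG.
Qed.

End Feasibility.

Theorem theorem3 (R : realType) (m n T N : nat)
  (eps delta : R) (nrm : 'cV[R]_m -> R) (Xi : set 'cV[R]_m)
  (zeta : 'I_N -> 'cV[R]_m)
  (A : 'I_T -> 'M[R]_(m, n)) (a : 'I_T -> 'cV[R]_m) (b : 'I_T -> 'cV[R]_n)
  (h : 'I_T -> R) (S : set 'cV[R]_n) (M : 'I_T -> R) :
  0 < eps -> eps < 1 -> 0 < delta -> (0 < N)%N ->
  is_norm nrm ->
  Xi !=set0 -> closed Xi -> convex_set (Xi : set (convex_lmodType 'cV[R]_m)) ->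
  (forall i, Xi (zeta i)) ->
  (forall x, S x -> forall r, x r 0 = 0 \/ x r 0 = 1) ->
  (forall lam s z alpha x, S x ->
     systemC2 nrm Xi zeta eps delta A a b h lam s z alpha x ->
     forall t, alpha t <= M t) ->
  convex_set (ZhatC2 nrm Xi zeta eps delta A a b h M
                : set (convex_lmodType 'cV[R]_n)) /\
  S `&` ZhatC2 nrm Xi zeta eps delta A a b h M
    = S `&` ZC2 nrm Xi zeta eps delta A a b h /\
  S `&` ZC2 nrm Xi zeta eps delta A a b h
    `<=` S `&` ZD nrm Xi zeta eps delta A a b h.
Proof.
move=> _ _ _ _ nrmP _ cXi _ _ S01 alM; split; first exact: ZhatC2_convex.
split; last by move=> x [Sx Zx]; split => //; exact: ZC2_sub_ZD.
apply/seteqP; split=> x [Sx Zx]; split => //.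
  exact: ZhatC2_sub_ZC2 (S01 x Sx) Zx.
exact: ZC2_sub_ZhatC2 (S01 x Sx) (fun lam s z al => alM lam s z al x Sx) Zx.
Qed.
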